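(* Let $\mathcal{H}_A,\mathcal{H}_B$ be finite-dimensional Hilbert spaces, $d_A=\dim\mathcal{H}_A\geq2$, with a fixed reference basis $\{|i\rangle_A\}$ of $\mathcal{H}_A$. For every state $\rho_{AB}$ on $\mathcal{H}_A\otimes\mathcal{H}_B$, $$1+\frac{1}{d_A-1}C^{A|B}_{l_1}(\rho_{AB})\leq 2^{C^{A|B}_{\max}(\rho_{AB})}\leq 1+C^{A|B}_{l_1}(\rho_{AB}).$$
   Context: $D_{\max}(\rho\|\sigma)=\min\{\lambda\ge0:\rho\leq2^\lambda\sigma\}$. The set $\mathcal{IQ}$ of incoherent-quantum states consists of states $\sum_kp_k\sigma^A_k\otimes\tau^B_k$ with $\sigma^A_k$ diagonal in $\{|i\rangle_A\}$ and $\tau^B_k$ arbitrary states; $C^{A|B}_{\max}(\rho_{AB})=\min_{\sigma\in\mathcal{IQ}}D_{\max}(\rho_{AB}\|\sigma)$. Writing $\rho_{AB}=\sum_{i,j}|i\rangle\langle j|_A\otimes\rho^B_{ij}$, $C^{A|B}_{l_1}(\rho_{AB})=\sum_{i\neq j}\|\rho^B_{ij}\|_{\mathrm{tr}}$ with $\|X\|_{\mathrm{tr}}=\mathrm{Tr}\sqrt{X^\dagger X}$. Logarithms are base 2. *)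

From HB Require Import structures.
From mathcomp Require Import all_boot all_order all_algebra.
From mathcomp Require Import complex mxtens.
From mathcomp Require Import boolp classical_sets reals ereal exp.
From Stdlib Require Import ClassicalEpsilon.

Set Implicit Arguments.
Unset Strict Implicit.
Unset Printing Implicit Defensive.

Import Order.TTheory GRing.Theory Num.Theory.
Local Open Scope ring_scope.
Local Open Scope classical_set_scope.

Section QDefs.
Variable R : realType.
Local Notation C := R[i].

Definition adjmx m n (A : 'M[C]_(m, n)) : 'M[C]_(n, m) := (map_mx Num.conj A)^T.

Definition psd n (A : 'M[C]_n) : Prop :=
  adjmx A = A /\ forall v : 'cV[C]_n, 0 <= (adjmx v *m A *m v) 0 0.

Definition loewner n (A B : 'M[C]_n) : Prop := psd (B - A).

Definition is_state n (rho : 'M[C]_n) : Prop := psd rho /\ \tr rho = 1.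

Definition incoherent_state n (s : 'M[C]_n) : Prop :=
  is_state s /\ forall i j : 'I_n, i != j -> s i j = 0.

(* incoherent-quantum states sum_k p_k sigma_k^A (x) tau_k^B ;
   the tensor product uses mxtens (index (i,k) of A(x)B is i*dB + k) *)
Definition IQ (dA dB : nat) (sigma : 'M[C]_(dA * dB)) : Prop :=
  exists (K : nat) (p : 'I_K -> R) (s : 'I_K -> 'M[C]_dA) (t : 'I_K -> 'M[C]_dB),
    [/\ forall k, 0 <= p k, \sum_k p k = 1,
        forall k, incoherent_state (s k),
        forall k, is_state (t k) &
        sigma = \sum_k (real_complex R (p k)) *: (s k *t t k)].

Definition Dmax n (rho sigma : 'M[C]_n) : \bar R :=
  ereal_inf [set (l%:E)%E | l in
    [set l : R | 0 <= l /\ loewner rho (real_complex R (2 `^ l) *: sigma)]].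

Definition Cmax (dA dB : nat) (rho : 'M[C]_(dA * dB)) : \bar R :=
  ereal_inf [set Dmax rho s | s in @IQ dA dB].

Definition msqrt n (M : 'M[C]_n) : 'M[C]_n :=
  epsilon (inhabits 0) (fun S => psd S /\ S *m S = M).

Definition tracenorm n (X : 'M[C]_n) : R :=
  complex.Re (\tr (msqrt (adjmx X *m X))).

(* block rho^B_{ij} of rho_{AB} = sum_{ij} |i><j| (x) rho^B_{ij} *)
Definition blockB (dA dB : nat) (rho : 'M[C]_(dA * dB)) (i j : 'I_dA) : 'M[C]_dB :=
  \matrix_(k, l) rho (mxtens_index (i, k)) (mxtens_index (j, l)).

Definition Cl1 (dA dB : nat) (rho : 'M[C]_(dA * dB)) : R :=
  \sum_(i : 'I_dA) \sum_(j : 'I_dA | i != j) tracenorm (blockB rho i j).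

End QDefs.

(** Write [rho = sum_ij |i><j| (x) X_ij] and take polar decompositions
    [X_ij = P_ij |X_ij|], so that [C_l1(rho) = sum_(i <> j) Tr |X_ij|].

    Upper bound: the block-diagonal operator
    [D = sum_i |i><i| (x) (X_ii + 1/2 sum_(j <> i) (X_ij P_ij^* + |X_ji|))]
    dominates [rho], since [D - rho = 1/2 sum_(i <> j) Y_ij |X_ij| Y_ij^*] with
    [Y_ij = |i> (x) P_ij - |j> (x) 1].  Its trace is [1 + C_l1(rho)], so
    [D / (1 + C_l1(rho))] is incoherent-quantum and [rho <= (1 + C_l1) sigma].

    Lower bound: if [rho <= mu sigma] with [sigma] incoherent-quantum, then
    [N = mu sigma - rho] is positive with off-diagonal blocks [- X_ij].
    Compressing [N] by [|i> (x) P_ij + |j> (x) 1] gives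
    [2 Tr |X_ij| <= Tr N_ii + Tr N_jj], and summing over [i <> j] yields
    [C_l1(rho) <= (d_A - 1) Tr N = (d_A - 1) (mu - 1)]. *)

From HB Require Import structures.
From mathcomp Require Import all_boot all_order all_algebra.
From mathcomp Require Import complex mxtens.
From mathcomp Require Import boolp classical_sets reals ereal exp.
From mathcomp Require Import spectral.
From mathcomp Require Import ring.
From Stdlib Require Import ClassicalEpsilon.

Set Implicit Arguments.
Unset Strict Implicit.
Unset Printing Implicit Defensive.
Import Order.TTheory GRing.Theory Num.Theory.
Local Open Scope ring_scope.

Section Adjoint.
Variable R : realType.
Local Notation C := R[i].

Lemma adjmxK m n (A : 'M[C]_(m, n)) : adjmx (adjmx A) = A.
Proof. by apply/matrixP => i j; rewrite !mxE conjCK. Qed.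

Lemma adjmxM m n p (A : 'M[C]_(m, n)) (B : 'M[C]_(n, p)) :
  adjmx (A *m B) = adjmx B *m adjmx A.
Proof.
apply/matrixP => i j; rewrite !mxE rmorph_sum; apply: eq_bigr => k _.
by rewrite !mxE rmorphM mulrC.
Qed.

Lemma adjmxD m n (A B : 'M[C]_(m, n)) : adjmx (A + B) = adjmx A + adjmx B.
Proof. by apply/matrixP => i j; rewrite !mxE rmorphD. Qed.

Lemma adjmxN m n (A : 'M[C]_(m, n)) : adjmx (- A) = - adjmx A.
Proof. by apply/matrixP => i j; rewrite !mxE rmorphN. Qed.

Lemma adjmxB m n (A B : 'M[C]_(m, n)) : adjmx (A - B) = adjmx A - adjmx B.
Proof. by rewrite adjmxD adjmxN. Qed.

Lemma adjmxZ m n (c : C) (A : 'M[C]_(m, n)) : adjmx (c *: A) = c^* *: adjmx A.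
Proof. by apply/matrixP => i j; rewrite !mxE rmorphM. Qed.

Lemma adjmx0 m n : adjmx (0 : 'M[C]_(m, n)) = 0.
Proof. by apply/matrixP => i j; rewrite !mxE rmorph0. Qed.

Lemma adjmx1 n : adjmx (1%:M : 'M[C]_n) = 1%:M.
Proof. by apply/matrixP => i j; rewrite !mxE eq_sym conjC_nat. Qed.

Lemma adjmx_diag n (d : 'rV[C]_n) : adjmx (diag_mx d) = diag_mx (map_mx Num.conj d).
Proof.
apply/matrixP => i j; rewrite !mxE eq_sym.
by case: eqP => [->|_]; rewrite ?mulr1n ?mulr0n ?rmorph0.
Qed.

Lemma adjmx_trmxC m n (A : 'M[C]_(m, n)) : adjmx A = map_mx Num.conj A^T.
Proof. by rewrite /adjmx map_trmx. Qed.

Lemma mxtrace_adj n (A : 'M[C]_n) : \tr (adjmx A) = (\tr A)^*.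
Proof. by rewrite /mxtrace rmorph_sum; apply: eq_bigr => i _; rewrite !mxE. Qed.

End Adjoint.

Section PSD.
Variable R : realType.
Local Notation C := R[i].

Lemma psd_congr m n (A : 'M[C]_m) (Y : 'M[C]_(m, n)) :
  psd A -> psd (adjmx Y *m A *m Y).
Proof.
move=> [hA fA]; split; first by rewrite !adjmxM adjmxK hA mulmxA.
by move=> v; have := fA (Y *m v); rewrite adjmxM !mulmxA.
Qed.

Lemma psd1 n : psd (1%:M : 'M[C]_n).
Proof.
split=> [|v]; first exact: adjmx1.
rewrite mulmx1 mxE; apply: sumr_ge0 => k _.
by rewrite !mxE mulrC mul_conjC_ge0.
Qed.

Lemma psd_gram m n (B : 'M[C]_(m, n)) : psd (adjmx B *m B).
Proof. by have := psd_congr B (psd1 m); rewrite mulmx1. Qed.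

Lemma psdD n (A B : 'M[C]_n) : psd A -> psd B -> psd (A + B).
Proof.
move=> [hA fA] [hB fB]; split; first by rewrite adjmxD hA hB.
by move=> v; rewrite mulmxDr mulmxDl mxE addr_ge0.
Qed.

Lemma psd_sum n (I : finType) (P : pred I) (F : I -> 'M[C]_n) :
  (forall i, P i -> psd (F i)) -> psd (\sum_(i | P i) F i).
Proof.
move=> hF; apply: (big_ind (fun M : 'M[C]_n => psd M)); [|exact: psdD|exact: hF].
by split=> [|v]; rewrite ?adjmx0 // mulmx0 mul0mx mxE.
Qed.

Lemma psdZ n (c : C) (A : 'M[C]_n) : 0 <= c -> psd A -> psd (c *: A).
Proof.
move=> c0 [hA fA]; split; first by rewrite adjmxZ hA geC0_conj.
by move=> v; rewrite -scalemxAr -scalemxAl mxE mulr_ge0.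
Qed.

Lemma psd_diag_ge0 n (A : 'M[C]_n) i : psd A -> 0 <= A i i.
Proof.
move=> [_ /(_ (delta_mx i 0))].
have -> : adjmx (delta_mx i 0 : 'cV[C]_n) = delta_mx 0 i.
  by apply/matrixP => a b; rewrite !mxE conjC_nat andbC.
by rewrite -rowE -colE !mxE.
Qed.

Lemma psd_tr_ge0 n (A : 'M[C]_n) : psd A -> 0 <= \tr A.
Proof. by move=> hA; apply: sumr_ge0 => i _; apply: psd_diag_ge0. Qed.

Lemma gram_eq0 m n (M : 'M[C]_(m, n)) : \tr (adjmx M *m M) = 0 -> M = 0.
Proof.
move=> /(psumr_eq0P (fun b _ => psd_diag_ge0 b (psd_gram M))) col0.
apply/matrixP => a b; have := col0 b isT; rewrite mxE.
have entry_ge0 c : true -> 0 <= adjmx M b c * M c b.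
  by rewrite !mxE mulrC mul_conjC_ge0.
move=> /(psumr_eq0P entry_ge0)/(_ a isT); rewrite !mxE.
by move=> /eqP; rewrite mulf_eq0 conjC_eq0 orbb => /eqP.
Qed.

End PSD.

Section Spectral.
Variable R : realType.
Local Notation C := R[i].
Variable n : nat.
Implicit Types A : 'M[C]_n.

Local Notation V A := (spectralmx A).
Local Notation d A := (spectral_diag A).

Lemma spectral_adj_unitary A : V A *m adjmx (V A) = 1%:M.
Proof. by rewrite adjmx_trmxC; apply/unitarymxP/spectral_unitarymx. Qed.

Lemma herm_spectralE A :
  adjmx A = A -> A = adjmx (V A) *m diag_mx (d A) *m V A.
Proof.
move=> hA; have -> : adjmx (V A) = invmx (V A).
  by rewrite invmx_unitary ?spectral_unitarymx // adjmx_trmxC.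
by apply/orthomx_spectralP/normalmxP; rewrite -adjmx_trmxC hA.
Qed.

Lemma herm_spectral_diagE A :
  adjmx A = A -> diag_mx (d A) = V A *m A *m adjmx (V A).
Proof.
move=> hA; rewrite [X in _ *m X *m _](herm_spectralE hA).
by rewrite !mulmxA spectral_adj_unitary mul1mx -mulmxA spectral_adj_unitary mulmx1.
Qed.

Lemma herm_spectral_real A k : adjmx A = A -> (d A 0 k)^* = d A 0 k.
Proof.
move=> hA; have : adjmx (diag_mx (d A)) = diag_mx (d A).
  by rewrite herm_spectral_diagE // !adjmxM adjmxK hA mulmxA.
by rewrite adjmx_diag => /matrixP/(_ k k); rewrite !mxE eqxx !mulr1n.
Qed.

Lemma psd_spectral_ge0 A k : psd A -> 0 <= d A 0 k.
Proof.
move=> hA; have := psd_diag_ge0 k (psd_congr (adjmx (V A)) hA).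
by rewrite adjmxK -herm_spectral_diagE ?hA.1 // mxE eqxx mulr1n.
Qed.

End Spectral.

(* [f(A)] through the spectral decomposition; meaningful for normal [A]. *)
HB.lock Definition mxfun (R : realType) n (f : R[i] -> R[i]) (A : 'M[R[i]]_n) :=
  adjmx (spectralmx A) *m diag_mx (map_mx f (spectral_diag A)) *m spectralmx A.

Section FunctionalCalculus.
Variable R : realType.
Local Notation C := R[i].
Variable n : nat.
Implicit Types (A : 'M[C]_n) (f g : C -> C).

Local Notation V A := (spectralmx A).
Local Notation d A := (spectral_diag A).

Lemma mxfunM f g A : mxfun f A *m mxfun g A = mxfun (fun x => f x * g x) A.
Proof.
rewrite mxfun.unlock !mulmxA -[_ *m V A *m adjmx (V A)]mulmxA.
rewrite spectral_adj_unitary mulmx1 -[_ *m diag_mx _ *m diag_mx _]mulmxA mulmx_diag.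
by congr (_ *m diag_mx _ *m _); apply/rowP => k; rewrite !mxE.
Qed.

Lemma adjmx_mxfun f A : adjmx (mxfun f A) = mxfun (fun x => (f x)^*) A.
Proof.
by rewrite mxfun.unlock !adjmxM adjmxK adjmx_diag mulmxA -map_mx_comp.
Qed.

Lemma eq_mxfun f g A :
  (forall k, f (d A 0 k) = g (d A 0 k)) -> mxfun f A = mxfun g A.
Proof.
move=> fg; rewrite mxfun.unlock; congr (_ *m diag_mx _ *m _).
by apply/rowP => k; rewrite !mxE fg.
Qed.

Lemma mxfun_id A : adjmx A = A -> mxfun id A = A.
Proof. by move=> hA; rewrite [RHS](herm_spectralE hA) mxfun.unlock map_mx_id. Qed.

Lemma mxfun_idl f A : adjmx A = A -> A *m mxfun f A = mxfun (fun x => x * f x) A.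
Proof. by move=> hA; rewrite -[X in X *m _](mxfun_id hA) mxfunM. Qed.

Lemma mxfun_idr f A : adjmx A = A -> mxfun f A *m A = mxfun (fun x => f x * x) A.
Proof. by move=> hA; rewrite -[X in _ *m X](mxfun_id hA) mxfunM. Qed.

Lemma herm_mxfun f A : adjmx A = A -> (forall x, (f x)^* = f x^*) ->
  adjmx (mxfun f A) = mxfun f A.
Proof.
move=> hA fC; rewrite adjmx_mxfun; apply: eq_mxfun => k.
by rewrite fC herm_spectral_real.
Qed.

Lemma psd_mxfun f A : (forall k, 0 <= f (d A 0 k)) -> psd (mxfun f A).
Proof.
move=> f_ge0; have := psd_gram (mxfun (fun x => sqrtC (f x)) A).
rewrite adjmx_mxfun mxfunM (@eq_mxfun _ f) // => k.
by rewrite geC0_conj ?sqrtC_ge0 // -expr2 sqrtCK.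
Qed.

Lemma msqrt_spec (M : 'M[C]_n) : psd M -> psd (msqrt M) /\ msqrt M *m msqrt M = M.
Proof.
move=> hM; apply: (epsilon_spec (inhabits 0) (fun S => psd S /\ S *m S = M)).
exists (mxfun sqrtC M); split.
  by apply: psd_mxfun => k; rewrite sqrtC_ge0 psd_spectral_ge0.
by rewrite mxfunM -[RHS](mxfun_id hM.1); apply: eq_mxfun => k; rewrite -expr2 sqrtCK.
Qed.

Lemma psd_tr_eq0 A : psd A -> \tr A = 0 -> A = 0.
Proof.
move=> hA; have [[hS _] hSS] := msqrt_spec hA.
by rewrite -hSS -{1}hS => /gram_eq0 ->; rewrite mul0mx.
Qed.

End FunctionalCalculus.

Local Open Scope complex_scope.

Section Polar.
Variable R : realType.
Local Notation C := R[i].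
Variables m n : nat.
Implicit Types X : 'M[C]_(m, n).

Definition absmx X := msqrt (adjmx X *m X).

(* The partial isometry [P] of the polar decomposition [X = P |X|]:
   [mxfun GRing.inv |X|] is the Moore-Penrose inverse of [|X|], as [0^-1 = 0]. *)
Definition polar X := X *m mxfun GRing.inv (absmx X).

Lemma psd_absmx X : psd (absmx X).
Proof. exact: (msqrt_spec (psd_gram X)).1. Qed.

Lemma absmx_sqr X : absmx X *m absmx X = adjmx X *m X.
Proof. exact: (msqrt_spec (psd_gram X)).2. Qed.

Lemma mulmx_polar_absmx X : polar X *m absmx X = X.
Proof.
set S := absmx X; have hS : adjmx S = S := (psd_absmx X).1.
pose E := 1%:M - mxfun GRing.inv S *m S.
have SE : S *m E = 0.
  rewrite mulmxBr mulmx1 mxfun_idr // mxfun_idl //.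
  rewrite [X in _ - X](@eq_mxfun _ _ _ id) => [|k /=].
    by rewrite mxfun_id // subrr.
  by have [->|x0] := eqVneq (spectral_diag S 0 k) 0; rewrite ?mul0r // mulVKf.
have XE : X *m E = 0.
  apply: gram_eq0; rewrite adjmxM -!mulmxA (mulmxA (adjmx X)) -absmx_sqr.
  by rewrite -mulmxA SE !mulmx0 mxtrace0.
by move: XE; rewrite mulmxBr mulmx1 mulmxA => /eqP; rewrite subr_eq0 => /eqP <-.
Qed.

Lemma polar_partial_isometry X : polar X *m adjmx (polar X) *m polar X = polar X.
Proof.
set S := absmx X; have hS : adjmx S = S := (psd_absmx X).1.
rewrite /polar adjmxM (herm_mxfun hS) => [|x]; last exact: fmorphV.
rewrite -!mulmxA; congr (X *m _).
rewrite (mulmxA (adjmx X)) -absmx_sqr !mulmxA mxfunM !mxfun_idr // mxfunM.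
apply: eq_mxfun => k /=; set x := spectral_diag S 0 k.
by have [->|x0] := eqVneq x 0; rewrite ?invr0 ?mul0r //; field.
Qed.

Lemma mxtrace_adj_polar X : \tr (adjmx (polar X) *m X) = \tr (absmx X).
Proof.
set S := absmx X; have hS : adjmx S = S := (psd_absmx X).1.
rewrite /polar adjmxM (herm_mxfun hS) => [|x]; last exact: fmorphV.
rewrite -mulmxA -absmx_sqr mulmxA !mxfun_idr // -[in RHS](mxfun_id hS).
congr mxtrace; apply: eq_mxfun => k /=; set x := spectral_diag S 0 k.
by have [->|x0] := eqVneq x 0; rewrite ?invr0 ?mul0r //; field.
Qed.

End Polar.

Lemma tracenormE (R : realType) n (X : 'M[R[i]]_n) :
  (tracenorm X)%:C = \tr (absmx X).
Proof. exact/RRe_real/ger0_real/psd_tr_ge0/psd_absmx. Qed.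

Section Compression.
Variable R : realType.
Local Notation C := R[i].

Lemma mxtrace_le_proj n (N Q : 'M[C]_n) :
  psd N -> adjmx Q = Q -> Q *m Q = Q -> \tr (N *m Q) <= \tr N.
Proof.
move=> hN hQ QQ; pose Q' := 1%:M - Q.
have hQ' : adjmx Q' = Q' by rewrite adjmxB adjmx1 hQ.
have Q'Q' : Q' *m Q' = Q' by rewrite mulmxBr mulmx1 mulmxBl mul1mx QQ subrr subr0.
have := psd_tr_ge0 (psd_congr Q' hN).
rewrite hQ' mxtrace_mulC mulmxA Q'Q' mulmxBl mul1mx mxtraceD raddfN subr_ge0.
by rewrite mxtrace_mulC.
Qed.

Lemma psd_offdiag_absmx_le k p (N : 'M[C]_k) (U V : 'M[C]_(k, p)) (X : 'M[C]_p) :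
  psd N -> adjmx U *m N *m V = - X ->
  \tr (absmx X) *+ 2 <= \tr (adjmx U *m N *m U) + \tr (adjmx V *m N *m V).
Proof.
move=> hN hUV; set P := polar X; set s := \tr (absmx X).
set NU := adjmx U *m N *m U; set NV := adjmx V *m N *m V.
have hVU : adjmx V *m N *m U = - adjmx X.
  by rewrite -adjmxN -hUV !adjmxM adjmxK hN.1 mulmxA.
have eY : adjmx (U *m P + V) *m N *m (U *m P + V) =
    adjmx P *m NU *m P + adjmx P *m (adjmx U *m N *m V)
    + (adjmx V *m N *m U *m P + NV).
  by rewrite adjmxD adjmxM !mulmxDl !mulmxDr !mulmxA addrACA.
have trUP : \tr (adjmx P *m NU *m P) <= \tr NU.
  rewrite (mxtrace_mulC (adjmx P *m NU)) mulmxA (mxtrace_mulC (P *m adjmx P)).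
  apply: mxtrace_le_proj; first exact: psd_congr.
    by rewrite adjmxM adjmxK.
  by rewrite mulmxA polar_partial_isometry.
have trPX : \tr (adjmx P *m (adjmx U *m N *m V)) = - s.
  by rewrite hUV mulmxN raddfN /= mxtrace_adj_polar.
have trXP : \tr (adjmx V *m N *m U *m P) = - s.
  rewrite hVU mulNmx raddfN /= -[P]adjmxK -adjmxM mxtrace_adj mxtrace_adj_polar.
  by rewrite geC0_conj //; apply/psd_tr_ge0/psd_absmx.
have := psd_tr_ge0 (psd_congr (U *m P + V) hN).
rewrite eY !mxtraceD trPX trXP => compress_ge0.
rewrite -subr_ge0; apply: le_trans compress_ge0 _.
rewrite [leRHS](_ : _ = \tr NU + (- s + (- s + \tr NV))); last by rewrite mulr2n; ring.
by rewrite -addrA lerD2r.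
Qed.

End Compression.

Lemma sum_mulr_eq (R : pzSemiRingType) (T : finType) (x : T) (F : T -> R) :
  \sum_s F s * (s == x)%:R = F x.
Proof.
rewrite (bigD1 x) //= eqxx mulr1 big1 ?addr0 // => s /negbTE ->.
by rewrite mulr0.
Qed.

Section Blocks.
Variable R : realType.
Local Notation C := R[i].
Variables dA dB : nat.
Implicit Types (M N : 'M[C]_(dA * dB)) (i j a b : 'I_dA).

(* The isometry [|i> (x) 1] from [H_B] into [H_A (x) H_B]. *)
Definition embB i : 'M[C]_(dA * dB, dB) :=
  \matrix_(r, c) (r == mxtens_index (i, c))%:R.

Lemma mxtens_index_eq i j (k l : 'I_dB) :
  (mxtens_index (i, k) == mxtens_index (j, l)) = (i == j) && (k == l).
Proof.
apply/eqP/andP => [/(can_inj (@mxtens_indexK dA dB)) [-> ->] //|[/eqP-> /eqP->] //].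
Qed.

Lemma mulmx_embB p (A : 'M[C]_(p, dA * dB)) j r l :
  (A *m embB j) r l = A r (mxtens_index (j, l)).
Proof. by rewrite mxE; under eq_bigr do rewrite mxE; rewrite sum_mulr_eq. Qed.

Lemma adj_embB_mulmx p (A : 'M[C]_(dA * dB, p)) i k l :
  (adjmx (embB i) *m A) k l = A (mxtens_index (i, k)) l.
Proof.
rewrite mxE; under eq_bigr do rewrite !mxE conjC_nat mulrC.
exact: sum_mulr_eq.
Qed.

Lemma blockBE M i j : adjmx (embB i) *m M *m embB j = blockB M i j.
Proof. by apply/matrixP => k l; rewrite mulmx_embB adj_embB_mulmx mxE. Qed.

Lemma blockB_inj M N : (forall i j, blockB M i j = blockB N i j) -> M = N.
Proof.
move=> eMN; apply/matrixP => r s.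
case: (mxtens_indexP r) => a k; case: (mxtens_indexP s) => b l.
by have /matrixP/(_ k l) := eMN a b; rewrite !mxE.
Qed.

Lemma embB_orth i j : adjmx (embB i) *m embB j = if i == j then 1%:M else 0.
Proof.
apply/matrixP => k l; rewrite mulmx_embB !mxE mxtens_index_eq conjC_nat.
by rewrite (eq_sym j) (eq_sym l); case: (i == j); rewrite !mxE ?andbF.
Qed.

Lemma blockB_embB (T : 'M[C]_dB) i j a b :
  blockB (embB i *m T *m adjmx (embB j)) a b =
  if (a == i) && (b == j) then T else 0.
Proof.
rewrite -blockBE !mulmxA embB_orth -mulmxA embB_orth (eq_sym j).
by case: (a == i); case: (b == j); rewrite ?mul1mx ?mulmx1 ?mul0mx ?mulmx0.
Qed.

Lemma blockB_sum (I : finType) (P : pred I) (F : I -> 'M[C]_(dA * dB)) i j :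
  blockB (\sum_(k | P k) F k) i j = \sum_(k | P k) blockB (F k) i j.
Proof.
apply/matrixP => k l; rewrite !mxE !summxE; apply: eq_bigr => x _.
by rewrite mxE.
Qed.

Lemma blockBB M N i j : blockB (M - N) i j = blockB M i j - blockB N i j.
Proof. by apply/matrixP => k l; rewrite !mxE. Qed.

Lemma blockBZ (c : C) M i j : blockB (c *: M) i j = c *: blockB M i j.
Proof. by apply/matrixP => k l; rewrite !mxE. Qed.

Lemma blockB_tens (A : 'M[C]_dA) (T : 'M[C]_dB) i j :
  blockB (A *t T) i j = A i j *: T.
Proof. by apply/matrixP => k l; rewrite mxE tensmxE !mxE. Qed.

Lemma blockB_adj M i j : adjmx M = M -> blockB M j i = adjmx (blockB M i j).
Proof. by move=> hM; apply/matrixP => k l; rewrite !mxE -{1}hM !mxE. Qed.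

Lemma blockB_decomp M :
  M = \sum_i \sum_j embB i *m blockB M i j *m adjmx (embB j).
Proof.
apply: blockB_inj => a b; rewrite blockB_sum (bigD1 a) //= blockB_sum (bigD1 b) //=.
rewrite blockB_embB !eqxx big1 => [|j /negbTE hj]; last first.
  by rewrite blockB_embB [b == _]eq_sym hj andbF.
rewrite addr0 big1 ?addr0 // => i /negbTE hi; rewrite blockB_sum big1 // => j _.
by rewrite blockB_embB eq_sym hi.
Qed.

Lemma tens_delta_embB (T : 'M[C]_dB) a :
  delta_mx a a *t T = embB a *m T *m adjmx (embB a).
Proof.
apply: blockB_inj => i j; rewrite blockB_tens blockB_embB mxE.
by case: (i == a); case: (j == a); rewrite ?scale1r ?scale0r.
Qed.

Lemma mxtrace_blockB M : \tr M = \sum_i \tr (blockB M i i).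
Proof.
rewrite /mxtrace (reindex (@mxtens_index dA dB)) /=; last first.
  exists (@mxtens_unindex dA dB) => p _.
    exact: mxtens_indexK.
  exact: mxtens_unindexK.
by rewrite pair_big_dep; apply: eq_bigr => -[a k] _ /=; rewrite mxE.
Qed.

End Blocks.

Arguments embB {R dA dB} i.

Lemma sumr_offdiag_swap (V : zmodType) n (F : 'I_n -> 'I_n -> V) :
  \sum_i \sum_(j | i != j) F i j = \sum_i \sum_(j | i != j) F j i.
Proof.
rewrite (exchange_big_dep xpredT) //=; apply: eq_bigr => i _.
by apply: eq_bigl => j; rewrite eq_sym.
Qed.

Lemma sumr_offdiag_pairD (V : zmodType) n (a : 'I_n -> V) :
  \sum_i \sum_(j | i != j) (a i + a j) = (\sum_i a i) *+ n.-1 *+ 2.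
Proof.
have sum_const i : \sum_(j | i != j) a i = a i *+ n.-1.
  rewrite sumr_const; congr (_ *+ _).
  by rewrite -[n in RHS]card_ord -(cardC1 i); apply: eq_card => j; rewrite !inE eq_sym.
under eq_bigr do rewrite big_split /=.
rewrite big_split /= (sumr_offdiag_swap (fun i j => a j)) /=.
by under eq_bigr do rewrite sum_const; rewrite sumrMnl mulr2n.
Qed.

Section States.
Variable R : realType.
Local Notation C := R[i].

Lemma delta_state n (k : 'I_n) : is_state (delta_mx k k : 'M[C]_n).
Proof.
split.
  have := psd_gram (delta_mx 0 k : 'rV[C]_n).
  have -> : adjmx (delta_mx 0 k : 'rV[C]_n) = delta_mx k 0.
    by apply/matrixP => a b; rewrite !mxE conjC_nat andbC.
  by rewrite mul_delta_mx.
rewrite /mxtrace (bigD1 k) //= mxE !eqxx /= big1 ?addr0 // => j /negbTE hj.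
by rewrite mxE hj.
Qed.

Lemma delta_incoherent n (k : 'I_n) : incoherent_state (delta_mx k k : 'M[C]_n).
Proof.
split=> [|i j hij]; first exact: delta_state.
rewrite mxE; have [ik|] := eqVneq i k; last by [].
by rewrite -ik [j == _]eq_sym (negbTE hij).
Qed.

Lemma mxtrace_tens m n (A : 'M[C]_m) (B : 'M[C]_n) : \tr (A *t B) = \tr A * \tr B.
Proof.
rewrite mxtrace_blockB /mxtrace mulr_suml; apply: eq_bigr => i _.
by rewrite blockB_tens mulr_sumr; apply: eq_bigr => k _; rewrite mxE.
Qed.

Variables dA dB : nat.
Implicit Types (rho sigma : 'M[C]_(dA * dB)).

Lemma state_exists_B rho : is_state rho -> exists tau : 'M[C]_dB, is_state tau.
Proof.
move=> [_ tr1]; have dB_gt0 : (0 < dB)%N.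
  rewrite lt0n; apply/eqP => dB0; move: tr1; rewrite /mxtrace big1 => [/eqP|i _].
    by rewrite eq_sym oner_eq0.
  by have := ltn_ord i; rewrite {2}dB0 muln0.
by exists (delta_mx (Ordinal dB_gt0) (Ordinal dB_gt0)); apply: delta_state.
Qed.

Lemma IQ_mxtrace sigma : IQ sigma -> \tr sigma = 1.
Proof.
move=> [K [p [s [t [_ p1 hs ht ->]]]]].
rewrite raddf_sum /= -[1](rmorph1 (real_complex R)) -p1 rmorph_sum.
apply: eq_bigr => k _ /=; rewrite mxtraceZ mxtrace_tens.
by have [[_ ->] _] := hs k; have [_ ->] := ht k; rewrite !mulr1.
Qed.

Lemma IQ_blockB_offdiag sigma i j : IQ sigma -> i != j -> blockB sigma i j = 0.
Proof.
move=> [K [p [s [t [_ _ hs _ ->]]]]] hij; rewrite blockB_sum big1 // => k _.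
by rewrite blockBZ blockB_tens; have [_ ->] := hs k; rewrite // scale0r scaler0.
Qed.

Lemma IQ_blockdiag (D : 'I_dA -> 'M[C]_dB) (tau : 'M[C]_dB) :
  is_state tau -> (forall i, psd (D i)) -> \sum_i \tr (D i) = 1 ->
  IQ (\sum_i embB i *m D i *m adjmx (embB i)).
Proof.
move=> htau hD trD; pose c i := \tr (D i).
have Re_c i : (complex.Re (c i))%:C = c i by apply/RRe_real/ger0_real/psd_tr_ge0.
exists dA, (fun i => complex.Re (c i)), (fun i => delta_mx i i),
  (fun i => if c i == 0 then tau else (c i)^-1 *: D i); split.
- by move=> i; rewrite -lecR Re_c; apply: psd_tr_ge0.
- by rewrite -raddf_sum trD.
- by move=> i; apply: delta_incoherent.
- move=> i; case: eqP => // /eqP ci0; split; last by rewrite mxtraceZ mulVf.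
  by apply: psdZ; rewrite ?invr_ge0 ?psd_tr_ge0.
apply: eq_bigr => i _; rewrite tens_delta_embB Re_c scalemxAl scalemxAr.
congr (_ *m _ *m _); case: eqP => [ci0|/eqP ci0].
  by rewrite (psd_tr_eq0 (hD i) ci0) ci0 scale0r.
by rewrite scalerA mulfV ?scale1r.
Qed.

End States.

Section LowerBound.
Variable R : realType.
Local Notation C := R[i].
Variables dA dB : nat.
Implicit Types (rho sigma N : 'M[C]_(dA * dB)).

Lemma Cl1E rho :
  (Cl1 rho)%:C = \sum_i \sum_(j | i != j) \tr (absmx (blockB rho i j)).
Proof.
rewrite rmorph_sum; apply: eq_bigr => i _; rewrite rmorph_sum.
by apply: eq_bigr => j _; apply: tracenormE.
Qed.

Lemma Cl1_ge0 rho : 0 <= Cl1 rho.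
Proof.
rewrite -lecR Cl1E; apply: sumr_ge0 => i _; apply: sumr_ge0 => j _.
exact/psd_tr_ge0/psd_absmx.
Qed.

Lemma Cl1_le_offdiag rho N : psd N ->
  (forall i j, i != j -> blockB N i j = - blockB rho i j) ->
  (Cl1 rho)%:C <= \tr N *+ dA.-1.
Proof.
move=> hN hNrho.
suff : (Cl1 rho)%:C *+ 2 <= \tr N *+ dA.-1 *+ 2 by rewrite lerMn2r.
rewrite Cl1E -sumrMnl.
under eq_bigr do rewrite -sumrMnl.
apply: (@le_trans _ _
  (\sum_i \sum_(j | i != j) (\tr (blockB N i i) + \tr (blockB N j j)))).
  apply: ler_sum => i _; apply: ler_sum => j hij.
  rewrite -[blockB N i i]blockBE -[blockB N j j]blockBE.
  by apply: psd_offdiag_absmx_le; rewrite ?blockBE ?hNrho.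
by rewrite sumr_offdiag_pairD -mxtrace_blockB.
Qed.

Lemma IQ_loewner_ge rho sigma (mu : R) :
  (1 < dA)%N -> is_state rho -> IQ sigma -> loewner rho (mu%:C *: sigma) ->
  1 + Cl1 rho / (dA%:R - 1) <= mu.
Proof.
move=> dA_gt1 [_ tr1] hsigma hN.
have offdiag i j : i != j -> blockB (mu%:C *: sigma - rho) i j = - blockB rho i j.
  by move=> hij; rewrite blockBB blockBZ IQ_blockB_offdiag // scaler0 sub0r.
have := Cl1_le_offdiag hN offdiag.
rewrite mxtraceD raddfN /= mxtraceZ IQ_mxtrace // tr1 mulr1.
rewrite -[X in _ - X](rmorph1 (real_complex R)) -rmorphB -rmorphMn lecR.
have dA1 : dA.-1%:R = dA%:R - 1 :> R by rewrite -subn1 natrB ?(ltnW dA_gt1).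
have dA1_gt0 : 0 < dA%:R - 1 :> R by rewrite subr_gt0 ltr1n.
by rewrite -mulr_natr dA1 -lerBrDl ler_pdivrMr.
Qed.

End LowerBound.

Section UpperBound.
Variable R : realType.
Local Notation C := R[i].
Variables (dA dB : nat) (rho : 'M[C]_(dA * dB)).
Hypothesis hrho : is_state rho.

Local Notation E := (@embB R dA dB).
Local Notation X i j := (blockB rho i j).
Local Notation S i j := (absmx (blockB rho i j)).
Local Notation P i j := (polar (blockB rho i j)).

Definition dom_block i : 'M[C]_dB :=
  X i i + 2^-1 *: \sum_(j | i != j) (X i j *m adjmx (P i j) + S j i).

Definition dom_mx : 'M[C]_(dA * dB) := \sum_i E i *m dom_block i *m adjmx (E i).

Local Notation F i j :=
  ((E i *m P i j - E j) *m S i j *m adjmx (E i *m P i j - E j)).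

Lemma dom_termE i j : F i j =
  E i *m (X i j *m adjmx (P i j)) *m adjmx (E i) + E j *m S i j *m adjmx (E j)
  - (E i *m X i j *m adjmx (E j) + E j *m X j i *m adjmx (E i)).
Proof.
set p := P i j; set s := S i j.
have PS : p *m s = X i j := mulmx_polar_absmx _.
have hs : adjmx s = s := (psd_absmx _).1.
have SP : s *m adjmx p = X j i by rewrite (blockB_adj i j hrho.1.1) -PS adjmxM hs.
rewrite -SP -PS adjmxB adjmxM !mulmxBl !mulmxBr !mulmxA.
by rewrite opprB addrACA -opprD.
Qed.

Lemma dom_mx_subE : dom_mx - rho = 2^-1 *: \sum_i \sum_(j | i != j) F i j.
Proof.
set diag := \sum_i E i *m X i i *m adjmx (E i).
set off := \sum_i \sum_(j | i != j) E i *m X i j *m adjmx (E j).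
set TA := \sum_i \sum_(j | i != j) E i *m (X i j *m adjmx (P i j)) *m adjmx (E i).
set TS := \sum_i \sum_(j | i != j) E i *m S j i *m adjmx (E i).
have rhoE : rho = diag + off.
  rewrite [LHS]blockB_decomp /diag /off -big_split; apply: eq_bigr => i _.
  by rewrite (bigD1 i) //=; congr (_ + _); apply: eq_bigl => j; rewrite eq_sym.
have domE : dom_mx = diag + 2^-1 *: (TA + TS).
  rewrite /dom_mx /diag /TA /TS -big_split scaler_sumr -big_split /=.
  apply: eq_bigr => i _; rewrite -big_split /=.
  rewrite /dom_block mulmxDr mulmxDl -scalemxAr -scalemxAl mulmx_sumr mulmx_suml.
  by congr (_ + _ *: _); apply: eq_bigr => j _; rewrite mulmxDr mulmxDl.
have FE : \sum_i \sum_(j | i != j) F i j = TA + TS - (off + off).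
  under eq_bigr do under eq_bigr do rewrite dom_termE.
  under eq_bigr do rewrite sumrB !big_split /=.
  rewrite sumrB !big_split /=; congr (_ + _ - (_ + _)).
    exact: (sumr_offdiag_swap (fun i j => E j *m S i j *m adjmx (E j))).
  exact: (sumr_offdiag_swap (fun i j => E j *m X j i *m adjmx (E i))).
rewrite FE domE {1}rhoE opprD addrACA subrr add0r scalerBr.
by rewrite -mulr2n -(scaler_nat 2 off) scalerA mulVf ?scale1r // pnatr_eq0.
Qed.

Lemma loewner_dom_mx : loewner rho dom_mx.
Proof.
rewrite /loewner dom_mx_subE; apply: psdZ; first by rewrite invr_ge0 ler0n.
apply: psd_sum => i _; apply: psd_sum => j _.
by rewrite -{1}(adjmxK (E i *m P i j - E j)); apply/psd_congr/psd_absmx.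
Qed.

Lemma psd_dom_block i : psd (dom_block i).
Proof.
have <- : blockB dom_mx i i = dom_block i.
  rewrite blockB_sum (bigD1 i) //= blockB_embB eqxx big1 ?addr0 // => k /negbTE hk.
  by rewrite blockB_embB eq_sym hk.
rewrite -blockBE; apply: psd_congr.
by rewrite -(subrK rho dom_mx); apply: psdD; [exact: loewner_dom_mx | exact: hrho.1].
Qed.

Lemma mxtrace_dom_block : \sum_i \tr (dom_block i) = (1 + Cl1 rho)%:C.
Proof.
rewrite rmorphD rmorph1 /dom_block.
under eq_bigr do rewrite mxtraceD mxtraceZ raddf_sum /=.
rewrite big_split /= -mxtrace_blockB hrho.2 -mulr_sumr; congr (_ + _).
under eq_bigr do under eq_bigr do rewrite mxtraceD mxtrace_mulC mxtrace_adj_polar.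
under eq_bigr do rewrite big_split /=.
rewrite big_split /= -(sumr_offdiag_swap (fun i j => \tr (S i j))) /= -Cl1E.
by rewrite -mulr2n -[(Cl1 rho)%:C *+ 2]mulr_natl mulrA mulVf ?mul1r // pnatr_eq0.
Qed.

Lemma IQ_dominating :
  exists sigma, IQ sigma /\ loewner rho ((1 + Cl1 rho)%:C *: sigma).
Proof.
have [tau htau] := state_exists_B hrho.
set lam := (1 + Cl1 rho)%:C.
have lam_gt0 : 0 < lam by rewrite ltcR ltr_pwDl ?Cl1_ge0.
exists (\sum_i E i *m (lam^-1 *: dom_block i) *m adjmx (E i)); split.
  apply: (IQ_blockdiag htau) => [i|].
    by apply: psdZ; [rewrite invr_ge0 ltW | exact: psd_dom_block].
  under eq_bigr do rewrite mxtraceZ.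
  by rewrite -mulr_sumr mxtrace_dom_block mulVf ?gt_eqF.
rewrite (_ : _ *: _ = dom_mx); first exact: loewner_dom_mx.
rewrite scaler_sumr; apply: eq_bigr => i _.
by rewrite -scalemxAr -scalemxAl scalerA mulfV ?scale1r ?gt_eqF.
Qed.

End UpperBound.

Section Log2.
Variable R : realType.

Definition log2 (x : R) := ln x / ln 2.

Lemma ln2_gt0 : 0 < ln (2 : R).
Proof. by rewrite ln_gt0 // ltr1n. Qed.

Lemma log2K x : 0 < x -> 2 `^ log2 x = x.
Proof.
by move=> x_gt0; rewrite /powR pnatr_eq0 /= divfK ?gt_eqF ?ln2_gt0 // lnK.
Qed.

Lemma log2_le_powR x l : 0 < x -> x <= 2 `^ l -> log2 x <= l.
Proof.
move=> x_gt0 h; rewrite ler_pdivrMr ?ln2_gt0 // -ln_powR.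
by rewrite ler_ln ?posrE // powR_gt0.
Qed.

End Log2.

Section CmaxBounds.
Variable R : realType.
Local Notation C := R[i].
Variables (dA dB : nat) (rho : 'M[C]_(dA * dB)).

Lemma Cmax_le_log2 (c : R) sigma : 1 <= c -> IQ sigma ->
  loewner rho (c%:C *: sigma) -> (Cmax rho <= (log2 c)%:E)%E.
Proof.
move=> c_ge1 hsigma hle; apply: (@le_trans _ _ (Dmax rho sigma)).
  by apply: ereal_inf_lbound; exists sigma.
apply: ereal_inf_lbound; exists (log2 c); [split|by []].
  by apply: divr_ge0; [exact: ln_ge0 | exact: ltW (ln2_gt0 R)].
by rewrite log2K // (lt_le_trans ltr01).
Qed.

Lemma log2_le_Cmax (c : R) : 0 < c ->
  (forall sigma mu, IQ sigma -> loewner rho (mu%:C *: sigma) -> c <= mu) ->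
  ((log2 c)%:E <= Cmax rho)%E.
Proof.
move=> c_gt0 hc; apply/ereal_infP => _ [sigma hsigma <-].
apply/ereal_infP => _ [l [_ hl] <-].
by rewrite lee_fin; apply: log2_le_powR => //; exact: hc hl.
Qed.

End CmaxBounds.

Theorem proposition8 (R : realType) (dA dB : nat) (hdA : (2 <= dA)%N)
  (rho : 'M[R[i]]_(dA * dB)) (hrho : is_state rho) :
  Cmax rho \is a fin_num /\
  1 + Cl1 rho / (dA%:R - 1) <= 2 `^ (fine (Cmax rho)) <= 1 + Cl1 rho.
Proof.
set lo := 1 + _ / _; set hi := 1 + Cl1 rho.
have lo_ge1 : 1 <= lo by rewrite lerDl divr_ge0 ?Cl1_ge0 // subr_ge0 ler1n ltnW.
have hi_ge1 : 1 <= hi by rewrite lerDl Cl1_ge0.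
have [lo_gt0 hi_gt0] := (lt_le_trans ltr01 lo_ge1, lt_le_trans ltr01 hi_ge1).
have [sigma [hsigma hle]] := IQ_dominating hrho.
have := Cmax_le_log2 hi_ge1 hsigma hle.
have := log2_le_Cmax lo_gt0 (fun _ _ => IQ_loewner_ge hdA hrho).
case: (Cmax rho) => [r| |] //=; rewrite !lee_fin => lo_r r_hi; split=> //.
apply/andP; split; [rewrite -[lo](log2K lo_gt0) | rewrite -[hi](log2K hi_gt0)];
  by apply: ler_powR; rewrite ?ler1n.
Qed.
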